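(* Let $n\ge1$ and let $p$ be a strongly 312-avoiding permutation of $\{1,\dots,n\}$ with $p_n=1$. Then there is an integer $k$ with $1\le k\le n$ such that $p=(k+1)(k+2)\cdots n\;k(k-1)\cdots 2\,1$.
   Context: Permutations are written in one-line notation $p=p_1\cdots p_n$ with $p_i=p(i)$. $p$ contains a pattern $q=q_1\cdots q_m$ if there are indices $i_1<\cdots<i_m$ with $p_{i_r}<p_{i_s}$ iff $q_r<q_s$; otherwise $p$ avoids $q$. $p^2(i)=p(p(i))$. A permutation $p$ is strongly $q$-avoiding if both $p$ and $p^2$ avoid $q$. *)

(* Permutations of {1..n} are modelled as {perm 'I_n},
   i.e. positions and values are shifted down by one (0-indexed). *)
From mathcomp Require Import all_boot all_order all_fingroup.
Set Implicit Arguments. Unset Strict Implicit. Unset Printing Implicit Defensive.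

Definition contains_pattern (n : nat) (p : {perm 'I_n}) (q : seq nat) : Prop :=
  exists idx : 'I_(size q) -> 'I_n,
    (forall r s : 'I_(size q), (r < s)%N -> (idx r < idx s)%N) /\
    (forall r s : 'I_(size q),
        (p (idx r) < p (idx s))%N = (nth 0%N q r < nth 0%N q s)%N).

Definition avoids (n : nat) (p : {perm 'I_n}) (q : seq nat) : Prop :=
  ~ contains_pattern p q.

Definition strongly_avoiding (n : nat) (p : {perm 'I_n}) (q : seq nat) : Prop :=
  avoids p q /\ avoids (p * p)%g q.

From mathcomp Require Import all_boot all_order all_fingroup.
From mathcomp Require Import zify.
Set Implicit Arguments. Unset Strict Implicit. Unset Printing Implicit Defensive.

(* Work with the permutation as a function P on positions
   0..n (0-indexed values) with P n = 0, and let Q = P o P.  Let m be the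
   position of the maximum n, a = P 0, and x the position of the value m.
   312-avoidance of P makes P decreasing after m, and makes the values
   below a decreasing after position 0; since Q m = P n = 0 and Q x = n,
   312-avoidance of Q makes Q increase across m and decrease after x.
   Pigeonhole on Q 0, ..., Q m (all below Q n = a) gives m < a, whence
   m < x and every value v <= m sits at a position >= x; comparing the
   positions of two such values with both monotonicity facts shows that P
   is increasing on 0..m.  Finally P j < a for every j > m.  A strictly
   monotone map on an interval moves by at least one per step, so these
   facts pin down a + m = n and P i = a + i (i <= m), P i = n - i (i > m). *)

Definition avoids312_on (n : nat) (f : nat -> nat) : Prop :=
  forall i j l, i < j -> j < l -> l <= n -> f j < f l -> f l < f i -> False.

Lemma avoids312_on_ext (n : nat) (f g : nat -> nat) :
  (forall i, i <= n -> f i = g i) -> avoids312_on n f -> avoids312_on n g.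
Proof.
move=> fg avf i j l ij jl ln; rewrite -!fg; try lia.
exact: avf ij jl ln.
Qed.

Lemma increasing_spread (f : nat -> nat) (i j : nat) :
  (forall s t, i <= s -> s < t -> t <= j -> f s < f t) ->
  i <= j -> f i + (j - i) <= f j.
Proof.
elim: j => [|j IH] mono ij.
  by rewrite (_ : i = 0) ?subnn ?addn0 //; lia.
case: (leqP i j) => [ij1|ji]; last by rewrite (_ : i = j.+1) ?subnn ?addn0 //; lia.
have := IH (fun s t si st tj => mono s t si st (leqW tj)) ij1.
have := mono j j.+1 ij1 (ltnSn j) (leqnn _); lia.
Qed.

Lemma decreasing_spread (f : nat -> nat) (i j : nat) :
  (forall s t, i <= s -> s < t -> t <= j -> f t < f s) ->
  i <= j -> f j + (j - i) <= f i.
Proof.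
elim: j => [|j IH] mono ij.
  by rewrite (_ : i = 0) ?subnn ?addn0 //; lia.
case: (leqP i j) => [ij1|ji]; last by rewrite (_ : i = j.+1) ?subnn ?addn0 //; lia.
have := IH (fun s t si st tj => mono s t si st (leqW tj)) ij1.
have := mono j j.+1 ij1 (ltnSn j) (leqnn _); lia.
Qed.

Lemma injective_below (f : nat -> nat) (k a : nat) :
  (forall i j, i <= k -> j <= k -> f i = f j -> i = j) ->
  (forall i, i <= k -> f i < a) -> k < a.
Proof.
move=> f_inj f_lt.
have : size (map f (iota 0 k.+1)) <= size (iota 0 a).
  apply: uniq_leq_size.
  - rewrite map_inj_in_uniq ?iota_uniq // => i j.
    by rewrite !mem_iota => ik jk; apply: f_inj; lia.
  - move=> v /mapP [i]; rewrite !mem_iota => ik ->.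
    by rewrite add0n f_lt //; lia.
by rewrite size_map !size_iota.
Qed.

Section Avoid312.

Variables (n : nat) (f : nat -> nat).
Hypothesis f_inj : forall i j, i <= n -> j <= n -> f i = f j -> i = j.
Hypothesis f_avoid : avoids312_on n f.

Lemma below_then_decreasing (h i j : nat) :
  h < i -> i < j -> j <= n -> f i < f h -> f j < f h -> f j < f i.
Proof.
move=> hi ij jn fih fjh; case: (ltngtP (f j) (f i)) => // [fij|fji].
- by case: (f_avoid hi ij jn fij fjh).
- by have := f_inj jn (ltnW (leq_trans ij jn)) fji; lia.
Qed.

Lemma decreasing_after_top (m : nat) :
  (forall j, m < j -> j <= n -> f j < f m) ->
  forall i j, m <= i -> i < j -> j <= n -> f j < f i.
Proof.
move=> top i j mi ij jn; have [mi'|im] := ltnP m i.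
  by apply: (below_then_decreasing mi' ij jn); apply: top; lia.
have im' : i = m by lia.
by rewrite im'; apply: top; lia.
Qed.

Lemma increasing_across_bottom (i m l : nat) :
  i < m -> m < l -> l <= n -> f m < f i -> f m < f l -> f i < f l.
Proof.
move=> im ml ln fmi fml; case: (ltngtP (f i) (f l)) => // [fli|fil].
- by case: (f_avoid im ml ln fml fli).
- by have := f_inj (ltnW (leq_trans (ltn_trans im ml) ln)) ln fil; lia.
Qed.

End Avoid312.

Section StronglyAvoidingShape.

Variables (n : nat) (P : nat -> nat).
Hypothesis n_gt0 : 0 < n.
Hypothesis P_le : forall i, i <= n -> P i <= n.
Hypothesis P_inj : forall i j, i <= n -> j <= n -> P i = P j -> i = j.
Hypothesis P_onto : forall v, v <= n -> exists2 i, i <= n & P i = v.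
Hypothesis P_last : P n = 0.
Hypothesis P_avoid : avoids312_on n P.
Hypothesis Q_avoid : avoids312_on n (fun i => P (P i)).

(* P 0 differs from P n = 0. *)
Lemma first_gt0 : 0 < P 0.
Proof. by move: n_gt0 (P_inj (leq0n n) (leqnn n)); rewrite P_last; lia. Qed.

Variables (m x : nat).
Hypotheses (m_le : m <= n) (P_m : P m = n) (x_le : x <= n) (P_x : P x = m).

Lemma Q_inj (i j : nat) : i <= n -> j <= n -> P (P i) = P (P j) -> i = j.
Proof. by move=> ilen jlen /(P_inj (P_le ilen) (P_le jlen)) /(P_inj ilen jlen). Qed.

(* The maximum is not at the last position, which holds 0. *)
Lemma m_lt_n : m < n.
Proof.
rewrite ltn_neqAle m_le andbT; apply/eqP => mn.
by move: n_gt0 P_m; rewrite mn P_last; lia.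
Qed.

(* 312 with the maximum: P decreases from position m on. *)
Lemma P_decreasing_from_m (i j : nat) :
  m <= i -> i < j -> j <= n -> P j < P i.
Proof.
apply: (decreasing_after_top P_inj P_avoid) => k mk kn.
by move: (P_inj kn m_le) (P_le kn); rewrite P_m; lia.
Qed.

(* Q m = P n = 0, so 312 with that zero: Q increases across m. *)
Lemma Q_increasing_across_m (i l : nat) :
  i < m -> m < l -> l <= n -> P (P i) < P (P l).
Proof.
move=> im ml ln; have ilen : i <= n by lia.
apply: (increasing_across_bottom Q_inj Q_avoid im ml ln); rewrite P_m P_last.
- by move: (Q_inj ilen m_le); rewrite P_m P_last; lia.
- by move: (Q_inj ln m_le); rewrite P_m P_last; lia.
Qed.

(* Pigeonhole: Q 0, ..., Q m are distinct and below P 0, since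
   Q i < Q n = P 0 for i < m and Q m = 0. *)
Lemma m_lt_first : m < P 0.
Proof.
apply: (@injective_below (fun i => P (P i))) => [i j im jm|i im].
  by apply: Q_inj; lia.
case: (ltnP i m) => [im'|mi].
- by have := Q_increasing_across_m im' m_lt_n (leqnn n); rewrite P_last.
- have im' : i = m by lia.
  by rewrite im' P_m P_last first_gt0.
Qed.

(* Q x = n, so Q decreases from position x on. *)
Lemma Q_decreasing_from_x (i j : nat) :
  x <= i -> i < j -> j <= n -> P (P j) < P (P i).
Proof.
apply: (decreasing_after_top Q_inj Q_avoid) => k xk kn.
by move: (Q_inj kn x_le) (P_le (P_le kn)); rewrite P_x P_m; lia.
Qed.

(* Otherwise Q would decrease from m on, below Q m = 0. *)
Lemma m_lt_x : m < x.
Proof.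
rewrite ltnNge; apply/negP => xm.
by have := Q_decreasing_from_x xm m_lt_n (leqnn n); rewrite P_m P_last ltn0.
Qed.

(* Values up to m lie at positions >= x: such values and m itself are
   below P 0, and the values below P 0 decrease after position 0. *)
Lemma small_values_after_x (y : nat) : y <= n -> P y <= m -> x <= y.
Proof.
move=> yn Pym; have ma := m_lt_first.
case: (leqP x y) => // yx; case: (posnP y) => [y0|y_gt0].
  by move: Pym; rewrite y0; lia.
by have := below_then_decreasing P_inj P_avoid y_gt0 yx x_le; rewrite P_x; lia.
Qed.

(* P increases on 0..m: the positions of the values i < j <= m are both
   >= x > m, so P decreasing there and Q decreasing after x order them. *)
Lemma P_increasing_upto_m (i j : nat) : i < j -> j <= m -> P i < P j.
Proof.
move=> ij jm; have xm := m_lt_x.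
have [yi yin Pyi] : exists2 y, y <= n & P y = i by apply: P_onto; lia.
have [yj yjn Pyj] : exists2 y, y <= n & P y = j by apply: P_onto; lia.
have xyi : x <= yi by apply: small_values_after_x; lia.
have xyj : x <= yj by apply: small_values_after_x; lia.
case: (ltngtP yi yj) => [yij|yji|yij].
- by have := P_decreasing_from_m (ltnW (leq_trans xm xyi)) yij yjn; lia.
- by have := Q_decreasing_from_x xyj yji yin; rewrite Pyi Pyj.
- by move: Pyi; rewrite yij Pyj; lia.
Qed.

(* Every entry after m is below P 0: a larger one would order Q 0 and Q j
   both ways, by Q increasing across m and P decreasing after m. *)
Lemma after_m_below_first (j : nat) : m < j -> j <= n -> P j < P 0.
Proof.
move=> mj jn; have ma := m_lt_first; have Pjn := P_le jn.
have Pj_ne_n := P_inj jn m_le; have Pj_ne_a := P_inj jn (leq0n n).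
rewrite P_m in Pj_ne_n; rewrite ltnNge leq_eqVlt; apply/negP; case/orP.
  by move/eqP/esym/Pj_ne_a; lia.
move=> aPj; have m_gt0 : 0 < m by move: P_m; case: (posnP m) => [->|]; lia.
have := P_decreasing_from_m (ltnW ma) aPj Pjn.
by have := Q_increasing_across_m m_gt0 mj jn; lia.
Qed.

(* With a = P 0: P i >= a + i before m and P i >= n - i after m, while
   P m = n and P (m+1) < a bound them from above; this forces a + m = n
   and the claimed shape. *)
Lemma shape_from_first (i : nat) :
  i <= n -> P i = if i < n.+1 - P 0 then P 0 + i else n - i.
Proof.
move=> ilen; have mn := m_lt_n; have ma := m_lt_first.
have after_m := after_m_below_first (ltnSn m) mn.
have inc_spread s t : s <= t -> t <= m -> P s + (t - s) <= P t.
  move=> st tm; apply: increasing_spread => // u v _ uv vt.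
  by apply: P_increasing_upto_m; lia.
have dec_spread s t : m < s -> s <= t -> t <= n -> P t + (t - s) <= P s.
  move=> ms st tn; apply: decreasing_spread => // u v su uv vt.
  by apply: P_decreasing_from_m; lia.
have am : P 0 + m = n.
  have := inc_spread 0 m (leq0n m) (leqnn m).
  by have := dec_spread m.+1 n (ltnSn m) mn (leqnn n); rewrite P_m P_last; lia.
case: ifP => [i_before|i_after].
- have im : i <= m by lia.
  have := inc_spread 0 i (leq0n i) im.
  by have := inc_spread i m im (leqnn m); rewrite P_m; lia.
- have mi : m < i by lia.
  have := dec_spread i n mi ilen (leqnn n).
  by have := dec_spread m.+1 i (ltnSn m) mi ilen; rewrite P_last; lia.
Qed.

End StronglyAvoidingShape.

Lemma strongly_avoiding_shape_nat (n : nat) (P : nat -> nat) :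
  (forall i, i <= n -> P i <= n) ->
  (forall i j, i <= n -> j <= n -> P i = P j -> i = j) ->
  (forall v, v <= n -> exists2 i, i <= n & P i = v) ->
  P n = 0 -> avoids312_on n P -> avoids312_on n (fun i => P (P i)) ->
  exists k, [/\ 1 <= k, k <= n.+1 &
    forall i, i <= n -> P i = if i < n.+1 - k then k + i else n - i].
Proof.
move=> P_le P_inj P_onto P_last P_avoid Q_avoid.
have [n0|n_gt0] := posnP n.
  by exists 1; split=> // i; rewrite n0 leqn0 => /eqP ->; rewrite -{1}n0 P_last.
have [m m_le P_m] := P_onto n (leqnn n).
have [x x_le P_x] := P_onto m m_le.
exists (P 0); split.
- exact: first_gt0 n_gt0 P_inj P_last.
- exact: leqW (P_le 0 (leq0n n)).
- exact: shape_from_first n_gt0 P_le P_inj P_onto P_last P_avoid Q_avoid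
    m x m_le P_m x_le P_x.
Qed.

Lemma avoids312_on_perm (N : nat) (q : {perm 'I_N.+1}) :
  avoids q [:: 3; 1; 2] -> avoids312_on N (fun i => q (inord i)).
Proof.
move=> avq i j l ij jl lN qjl qli; apply: avq.
exists (fun r : 'I_3 => inord (nth 0 [:: i; j; l] r)); split.
- by move=> [[|[|[|r]]] hr] [[|[|[|s]]] hs] //= _; rewrite !inordK; lia.
- by move=> [[|[|[|r]]] hr] [[|[|[|s]]] hs] //=; lia.
Qed.

Theorem lemma3p6 (n : nat) (p : {perm 'I_n.+1}) :
  strongly_avoiding p [:: 3; 1; 2]%N ->
  nat_of_ord (p ord_max) = 0%N ->
  exists k : nat, [/\ (1 <= k)%N, (k <= n.+1)%N &
    forall i : 'I_n.+1,
      nat_of_ord (p i) = (if (i < n.+1 - k)%N then k + i else n - i)%N].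
Proof.
move=> [avP avQ] p_last; pose P i := nat_of_ord (p (inord i)).
have P_val (i : 'I_n.+1) : P i = p i by rewrite /P inord_val.
have [k [k_ge1 k_le shape]] : exists k, [/\ 1 <= k, k <= n.+1 &
    forall i, i <= n -> P i = if i < n.+1 - k then k + i else n - i].
  apply: strongly_avoiding_shape_nat.
  - by move=> i _; rewrite -ltnS ltn_ord.
  - move=> i j iN jN /val_inj/perm_inj/(congr1 val).
    by rewrite /= !inordK.
  - move=> v vN; exists ((p^-1)%g (inord v)); first by rewrite -ltnS ltn_ord.
    by rewrite P_val permKV inordK.
  - by rewrite /P -p_last; congr (nat_of_ord (p _)); apply: val_inj; rewrite /= inordK.
  - exact: avoids312_on_perm avP.
  - apply: avoids312_on_ext (avoids312_on_perm avQ) => i _.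
    by rewrite permM /P inord_val.
by exists k; split=> // i; rewrite -P_val shape // -ltnS ltn_ord.
Qed.
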